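(* Let $G$ be a connected graph of order $n$ and stability number $\alpha$ such that $F(G) \ge F(H)$ for every connected graph $H$ of order $n$ and stability number $\alpha$. Then either $G$ is $\alpha$-critical, or $G$ has an $\alpha$-critical decomposition.
   Context: All graphs are finite, simple and undirected; $\alpha(G)$ denotes the stability number. The Fibonacci index $F(G)$ is the number of stable sets of $G$, including the empty set. For an edge $e$, $G-e$ denotes $G$ with the edge $e$ deleted. An edge $e$ is $\alpha$-critical if $\alpha(G-e)>\alpha(G)$ and $\alpha$-safe otherwise; a graph is $\alpha$-critical if all its edges are $\alpha$-critical (a graph with no edge counts as $\alpha$-critical). A bridge of a connected graph $G$ is an edge $e$ such that $G-e$ is disconnected. For an $\alpha$-safe bridge $e=v_1v_2$ of $G$, the associated decomposition is $(G_1,v_1,G_2,v_2)$ where $G_1,G_2$ are the two connected components of $G-e$ with $v_1\in V(G_1)$, $v_2\in V(G_2)$. A decomposition $(G_1,v_1,G_2,v_2)$ is $\alpha$-critical if $G_1$ is $\alpha$-critical. *)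

(* A simple graph on a finite vertex type T is a
   symmetric, irreflexive relation e : rel T. *)
From mathcomp Require Import all_boot.
Set Implicit Arguments. Unset Strict Implicit. Unset Printing Implicit Defensive.

Section Graphs.
Variable T : finType.

Definition simple_graph (e : rel T) : Prop := symmetric e /\ irreflexive e.

Definition connected (e : rel T) : Prop := forall x y : T, connect e x y.

Definition stable (e : rel T) (A : {set T}) : bool :=
  [forall x in A, forall y in A, ~~ e x y].

Definition alpha (e : rel T) : nat := \max_(A : {set T} | stable e A) #|A|.

(* Fibonacci index: number of stable sets, including the empty set *)
Definition fibo (e : rel T) : nat := #|[set A : {set T} | stable e A]|.

Definition del_edge (e : rel T) (u v : T) : rel T :=
  fun x y => e x y && ~~ (((x == u) && (y == v)) || ((x == v) && (y == u))).

Definition alpha_critical_edge (e : rel T) (u v : T) : Prop :=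
  alpha e < alpha (del_edge e u v).

(* every edge is alpha-critical (vacuous for edgeless graphs) *)
Definition alpha_critical (e : rel T) : Prop :=
  forall u v, e u v -> alpha_critical_edge e u v.

Definition bridge (e : rel T) (u v : T) : Prop :=
  e u v /\ ~ connected (del_edge e u v).

Definition induced (e : rel T) (C : {set T}) : rel {x : T | x \in C} :=
  fun x y => e (val x) (val y).

Definition component (e : rel T) (x : T) : {set T} := [set y | connect e x y].

End Graphs.

Arguments induced {T} e C.

Definition has_alpha_critical_decomposition (T : finType) (e : rel T) : Prop :=
  exists v1 v2 : T,
    [/\ bridge e v1 v2, ~ alpha_critical_edge e v1 v2 &
        alpha_critical (induced (del_edge e v1 v2) (component (del_edge e v1 v2) v1))].

From mathcomp Require Import all_boot.
From Stdlib Require Import FunctionalExtensionality.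
Set Implicit Arguments. Unset Strict Implicit. Unset Printing Implicit Defensive.

(* Let G be connected with the maximum Fibonacci index among connected graphs
   of its order and stability number.
   1. Every alpha-safe edge uv of G is a bridge: otherwise G - uv would be a
      connected competitor with the same stability number and strictly more
      stable sets ({u, v} becomes stable).
   2. If G has no alpha-safe edge it is alpha-critical.  Otherwise choose an
      alpha-safe edge v1v2 whose side G1 (the component of v1 in G - v1v2) has
      the fewest vertices.  An edge ab of G1 that is alpha-critical in G stays
      alpha-critical in G - v1v2 and then in the component G1.  An edge ab of
      G1 that is alpha-safe in G is a bridge, so one of its ends, say a, is
      separated from v1 in G - ab; the side of a in G - ab is then a proper
      subset of G1, contradicting minimality. *)

Section StableSets.
Variable T : finType.
Implicit Types (e h : rel T) (A : {set T}).

Lemma stableP e A :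
  reflect (forall x y, x \in A -> y \in A -> ~~ e x y) (stable e A).
Proof.
apply: (iffP forall_inP) => [sA x y xA | sA x xA]; first exact: (forall_inP (sA x xA)).
by apply/forall_inP => y; apply: sA.
Qed.

Lemma alpha_attained e : exists2 A, stable e A & #|A| = alpha e.
Proof.
rewrite /alpha.
have [|A sA ->] := @eq_bigmax_cond _ (fun A : {set T} => stable e A) (fun A => #|A|).
  by apply/card_gt0P; exists set0; rewrite unfold_in; apply/stableP => x y; rewrite inE.
by exists A.
Qed.

Lemma stable_card_le_alpha e A : stable e A -> #|A| <= alpha e.
Proof. exact: (@leq_bigmax_cond _ (fun A : {set T} => stable e A) (fun A => #|A|)). Qed.

Lemma alpha_subrel e h : subrel h e -> alpha e <= alpha h.
Proof.
move=> he; have [A /stableP sA <-] := alpha_attained e; apply: stable_card_le_alpha.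
by apply/stableP => x y xA yA; apply: contra (sA x y xA yA); apply: he.
Qed.

End StableSets.

Section EdgeDeletion.
Variable T : finType.
Implicit Types (g e : rel T) (u v : T).

Lemma del_edge_sub g u v : subrel (del_edge g u v) g.
Proof. by move=> x y /andP []. Qed.

Lemma del_edgeC g u v : del_edge g v u = del_edge g u v.
Proof.
apply: functional_extensionality => x; apply: functional_extensionality => y.
by rewrite /del_edge orbC.
Qed.

Lemma del_edge_sym g u v : symmetric g -> symmetric (del_edge g u v).
Proof.
move=> g_sym x y; rewrite /del_edge g_sym.
by case: (x == u); case: (y == v); case: (x == v); case: (y == u).
Qed.

Lemma del_edge_simple g u v : simple_graph g -> simple_graph (del_edge g u v).
Proof. by case=> g_sym g_irr; split=> [|x]; [exact: del_edge_sym | rewrite /del_edge g_irr]. Qed.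

Lemma alpha_del_edge g u v : alpha g <= alpha (del_edge g u v).
Proof. exact/alpha_subrel/del_edge_sub. Qed.

(* Deleting an edge uv of a loopless graph keeps every stable set and makes
   {u, v} stable, so the Fibonacci index increases strictly. *)
Lemma fibo_del_edge g u v : irreflexive g -> g u v -> fibo g < fibo (del_edge g u v).
Proof.
move=> g_irr guv; apply/proper_card/properP; split.
  apply/subsetP => A; rewrite !inE => /stableP sA; apply/stableP => x y xA yA.
  by apply: contra (sA x y xA yA); apply: del_edge_sub.
have u_neq_v : u != v by apply: contraTneq guv => ->; rewrite g_irr.
exists [set u; v]; rewrite !inE.
  apply/stableP => x y; rewrite !inE => /orP [] /eqP -> /orP [] /eqP ->;
    by rewrite /del_edge ?g_irr ?eqxx ?orbT ?andbF.
by apply/stableP => /(_ u v); rewrite !inE !eqxx orbT guv => /(_ isT isT).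
Qed.

(* An alpha-critical edge ab remains alpha-critical after the deletion of an
   alpha-safe edge uv, since G - uv - ab is a subgraph of G - ab. *)
Lemma critical_edge_del_safe g u v a b :
  ~ alpha_critical_edge g u v -> alpha_critical_edge g a b ->
  alpha_critical_edge (del_edge g u v) a b.
Proof.
rewrite /alpha_critical_edge => /negP; rewrite -leqNgt => uv_safe ab_crit.
apply: leq_trans (leq_ltn_trans uv_safe ab_crit) _; apply: alpha_subrel.
by move=> x y /andP [/andP [gxy _] not_ab]; rewrite /del_edge gxy.
Qed.

(* An alpha-critical edge of e inside an e-closed vertex set C is
   alpha-critical in the subgraph induced by C: a maximum stable set S of
   e - ab can be split at C, and its part outside C combines with any stable
   set of e[C], so the part of S inside C beats every stable set of e[C]. *)
Lemma critical_edge_induced e (C : {set T}) (a b : {x : T | x \in C}) :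
  closed e C -> alpha_critical_edge e (val a) (val b) ->
  alpha_critical_edge (induced e C) a b.
Proof.
move=> C_closed ab_crit.
have [S /stableP sS cardS] := alpha_attained (del_edge e (val a) (val b)).
have [S1 /stableP sS1 cardS1] := alpha_attained (induced e C).
pose SC := [set x : {x : T | x \in C} | val x \in S].
have sSC : stable (del_edge (induced e C) a b) SC.
  apply/stableP => x y; rewrite !inE => xS yS.
  by apply: contra (sS _ _ xS yS); rewrite /induced /del_edge !val_eqE.
have cardSC : #|SC| = #|S :&: C|.
  rewrite -(card_imset _ val_inj); apply: eq_card => z.
  apply/imsetP/setIP => [[z0] | [zS zC]]; first by rewrite inE => z0S ->; split=> //; apply: valP.
  by exists (exist _ z zC); rewrite ?inE.
have sU : stable e ((val @: S1) :|: (S :\: C)).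
  apply/stableP => x y.
  case/setUP => [/imsetP [x0 x0S1 ->] | /setDP [xS xC]];
  case/setUP => [/imsetP [y0 y0S1 ->] | /setDP [yS yC]].
  - exact: sS1.
  - by apply/negP => /C_closed exy; move: yC; rewrite -exy (valP x0).
  - by apply/negP => /C_closed exy; move: xC; rewrite exy (valP y0).
  - have [/negbTE xa /negbTE xb] : x != val a /\ x != val b.
      by split; apply: contraNneq xC => ->; apply: valP.
    by apply: contra (sS _ _ xS yS) => exy; rewrite /del_edge exy xa xb.
have cardU : #|(val @: S1) :|: (S :\: C)| = #|S1| + #|S :\: C|.
  rewrite cardsU card_imset; last exact: val_inj.
  rewrite (_ : _ :&: _ = set0) ?cards0 ?subn0 //; apply/setP => z; rewrite in_set0.
  by apply/negbTE/negP => /setIP [/imsetP [z0 _ ->] /setDP [_]]; rewrite (valP z0).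
rewrite /alpha_critical_edge -cardS1; apply: leq_trans (stable_card_le_alpha sSC).
rewrite cardSC -(ltn_add2r #|S :\: C|) cardsID cardS -cardU.
exact: leq_ltn_trans (stable_card_le_alpha sU) ab_crit.
Qed.

End EdgeDeletion.

Section Connectivity.
Variables (T : finType) (g : rel T).
Hypothesis g_sym : symmetric g.

Let del_connect_sym u v : connect_sym (del_edge g u v).
Proof. exact/sym_connect_sym/del_edge_sym. Qed.

Lemma del_edge_cover a b z : connected g ->
  connect (del_edge g a b) a z || connect (del_edge g a b) b z.
Proof.
move=> g_conn.
pose P := [pred z | connect (del_edge g a b) a z || connect (del_edge g a b) b z].
have P_closed : closed g P.
  apply: intro_closed; first exact: sym_connect_sym.
  move=> x y gxy; rewrite !inE => /orP Px.
  case dxy: (del_edge g a b x y).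
    by case: Px => cx; rewrite (connect_trans cx (connect1 dxy)) ?orbT.
  move: dxy; rewrite /del_edge gxy => /negbFE /orP [] /andP [_ /eqP ->];
    by rewrite connect0 ?orbT.
by have := closed_connect P_closed (g_conn a z); rewrite !inE connect0 => <-.
Qed.

Lemma del_edge_connected a b : connected g ->
  connect (del_edge g a b) a b -> connected (del_edge g a b).
Proof.
move=> g_conn cab.
have from_a z : connect (del_edge g a b) a z.
  by case/orP: (del_edge_cover a b z g_conn) => // /(connect_trans cab).
by move=> x y; apply: connect_trans (from_a y); rewrite del_connect_sym.
Qed.

(* Let x lie in the component C of v1 in G - v1v2, and let the deletion of an
   edge xy separate x from y while leaving v1 joined to y.  Then the component
   of x in G - xy misses v1, hence never uses the edge v1v2, so it is a proper
   subset of C. *)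
Lemma component_del_edge_proper v1 v2 x y :
  x \in component (del_edge g v1 v2) v1 ->
  connect (del_edge g x y) v1 y -> ~ connect (del_edge g x y) x y ->
  component (del_edge g x y) x \proper component (del_edge g v1 v2) v1.
Proof.
move=> xC v1y not_xy.
have not_xv1 : ~~ connect (del_edge g x y) x v1.
  by apply/negP => xv1; apply: not_xy; apply: connect_trans xv1 v1y.
apply/properP; split; last by exists v1; rewrite !inE ?connect0.
apply/subsetP => z; rewrite !inE => xz.
pose P := [pred w | connect (del_edge g x y) x w && connect (del_edge g v1 v2) x w].
have P_closed : closed (del_edge g x y) P.
  apply: (intro_closed (del_connect_sym x y)) => w w' dww'; rewrite !inE => /andP [xw xw'].
  have xw'' := connect_trans xw (connect1 dww').
  rewrite xw''; apply: connect_trans xw' (connect1 _).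
  rewrite /del_edge (del_edge_sub dww'); apply/negP => /orP [] /andP [/eqP ew /eqP ew'].
  - by move: not_xv1; rewrite -ew xw.
  - by move: not_xv1; rewrite -ew' xw''.
have := closed_connect P_closed xz; rewrite !inE !connect0 => /esym /andP [_ xz'].
by move: xC; rewrite inE => /connect_trans; apply.
Qed.

End Connectivity.

Section ExtremalGraph.
Variables (n : nat) (g : rel 'I_n).
Hypotheses (g_simple : simple_graph g) (g_conn : connected g).
Hypothesis g_max : forall h : rel 'I_n, simple_graph h -> connected h ->
  alpha h = alpha g -> fibo h <= fibo g.

Let g_sym : symmetric g := proj1 g_simple.
Let g_irr : irreflexive g := proj2 g_simple.

Definition safe_edge (u v : 'I_n) : bool :=
  g u v && ~~ (alpha g < alpha (del_edge g u v)).

Definition side (u v : 'I_n) : {set 'I_n} := component (del_edge g u v) u.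

Lemma safe_edgeC u v : safe_edge v u = safe_edge u v.
Proof. by rewrite /safe_edge del_edgeC g_sym. Qed.

(* In an extremal graph the ends of an alpha-safe edge are separated by its
   deletion; otherwise G - uv would have more stable sets. *)
Lemma safe_edge_separates u v : safe_edge u v -> ~ connect (del_edge g u v) u v.
Proof.
case/andP => guv uv_safe cuv.
have alpha_eq : alpha (del_edge g u v) = alpha g.
  by apply/eqP; rewrite eqn_leq leqNgt uv_safe alpha_del_edge.
have := g_max (del_edge_simple u v g_simple) (del_edge_connected g_sym g_conn cuv) alpha_eq.
by rewrite leqNgt (fibo_del_edge g_irr guv).
Qed.

Lemma smaller_side v1 v2 a b :
  safe_edge a b -> a \in side v1 v2 -> b \in side v1 v2 ->
  exists x y, safe_edge x y /\ #|side x y| < #|side v1 v2|.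
Proof.
move=> ab_safe aC bC; have not_ab := safe_edge_separates ab_safe.
have ab_sym := sym_connect_sym (del_edge_sym a b g_sym).
case/orP: (del_edge_cover g_sym a b v1 g_conn); rewrite ab_sym => v1_side.
- exists b, a; split; first by rewrite safe_edgeC.
  apply/proper_card/component_del_edge_proper => //; rewrite del_edgeC //.
  by rewrite ab_sym.
- by exists a, b; split; last exact/proper_card/component_del_edge_proper.
Qed.

Lemma min_side_critical v1 v2 : safe_edge v1 v2 ->
  (forall x y, safe_edge x y -> #|side v1 v2| <= #|side x y|) ->
  alpha_critical (induced (del_edge g v1 v2) (side v1 v2)).
Proof.
case/andP => _ /negP v1v2_safe side_min a b dab.
have gab : g (val a) (val b) := del_edge_sub dab.
have [ab_crit | ab_safe] := boolP (alpha g < alpha (del_edge g (val a) (val b))).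
  apply: critical_edge_induced; last exact: critical_edge_del_safe.
  move=> x y dxy; rewrite !inE.
  exact: (connect_closed (sym_connect_sym (del_edge_sym v1 v2 g_sym))).
have ab_safe' : safe_edge (val a) (val b) by rewrite /safe_edge gab.
have [x [y [xy_safe xy_lt]]] := smaller_side ab_safe' (valP a) (valP b).
by have := side_min _ _ xy_safe; rewrite leqNgt xy_lt.
Qed.

End ExtremalGraph.

Theorem mainTheorem8 (n : nat) (g : rel 'I_n) :
  simple_graph g -> connected g ->
  (forall h : rel 'I_n, simple_graph h -> connected h ->
     alpha h = alpha g -> fibo h <= fibo g) ->
  alpha_critical g \/ has_alpha_critical_decomposition g.
Proof.
move=> g_simple g_conn g_max.
case: (pickP [pred p : 'I_n * 'I_n | safe_edge g p.1 p.2]) => [p0 p0_safe | no_safe].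
  right; have [[v1 v2] /= v1v2_safe side_min] :=
    arg_minnP (fun p : 'I_n * 'I_n => #|side g p.1 p.2|) p0_safe.
  exists v1, v2; split.
  - split; first by case/andP: v1v2_safe.
    by move=> conn; apply: (safe_edge_separates g_simple g_conn g_max v1v2_safe (conn v1 v2)).
  - by case/andP: v1v2_safe => _ /negP.
  - apply: min_side_critical => // x y xy_safe; exact: (side_min (x, y)).
left => u v guv; apply/negbFE; move: (no_safe (u, v)).
by rewrite /= /safe_edge guv.
Qed.
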